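(* $D(19,\{3,4\})\le 35$; equivalently, there exists a $\{K_3,K_4\}$-decomposition of $K_{19}$ with $\alpha\le 13$ (indeed one with $13$ copies of $K_3$ and $22$ copies of $K_4$).
   Context: A $\{K_3,K_4\}$-decomposition of $K_v$ is a collection of subgraphs, each isomorphic to $K_3$ or $K_4$, such that every edge of $K_v$ lies in exactly one of them. $\alpha$ and $\beta$ denote the numbers of copies of $K_3$ and $K_4$ in the decomposition (so $3\alpha+6\beta=\binom{v}{2}$). $D(v,\{3,4\})$ is the minimum of $\alpha+\beta$ over all such decompositions of $K_v$. *)

From mathcomp Require Import all_boot.
Set Implicit Arguments. Unset Strict Implicit. Unset Printing Implicit Defensive.

(* A copy of K_3 or K_4 in K_v is determined by its
   vertex set b (|b| = 3 or 4); its edges are all pairs of distinct vertices of b. *)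
Definition is_K34_decomp (v : nat) (B : seq {set 'I_v}) : bool :=
  all (fun b : {set 'I_v} => (#|b| == 3) || (#|b| == 4)) B &&
  [forall x : 'I_v, forall y : 'I_v,
     (x != y) ==> (count (fun b : {set 'I_v} => (x \in b) && (y \in b)) B == 1)].

Definition alphaK3 (v : nat) (B : seq {set 'I_v}) : nat :=
  count (fun b : {set 'I_v} => #|b| == 3) B.
Definition betaK4 (v : nat) (B : seq {set 'I_v}) : nat :=
  count (fun b : {set 'I_v} => #|b| == 4) B.

From mathcomp Require Import all_boot.

Set Implicit Arguments.
Unset Strict Implicit.
Unset Printing Implicit Defensive.

(* An explicit decomposition with 13 triangles and 22 copies of K_4, checked by
   computation on lists of natural numbers. It is invariant under the permutation
   of order 3 that fixes the vertex 18 and cycles each of the triples {0,1,2},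
   {3,4,5}, ..., {15,16,17}, so it consists of the orbits of eleven base blocks
   together with the two invariant blocks {9,10,11,18} and {15,16,17}. Since every
   block has 3 or 4 vertices, alpha + beta is just the number of blocks. *)

Definition block_of (v : nat) (s : seq nat) : {set 'I_v} := [set i : 'I_v | val i \in s].

Lemma card_block_of (v : nat) (s : seq nat) :
  #|block_of v s| = count (mem s) (iota 0 v).
Proof.
rewrite -val_enum_ord count_map -size_filter cardE enumT.
by apply/congr1/eq_filter => i; rewrite /= in_set.
Qed.

Definition nat_K34_decomp (v : nat) (L : seq (seq nat)) : bool :=
  all (fun s => (count (mem s) (iota 0 v) == 3) || (count (mem s) (iota 0 v) == 4)) L &&
  all (fun x => all (fun y =>
         (x != y) ==> (count (fun s => (x \in s) && (y \in s)) L == 1))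
       (iota 0 v)) (iota 0 v).

Lemma is_K34_decomp_block_of (v : nat) (L : seq (seq nat)) :
  nat_K34_decomp v L -> is_K34_decomp (map (block_of v) L).
Proof.
case/andP=> sizes pairs; apply/andP; split.
  by rewrite all_map; apply: sub_all sizes => s /=; rewrite card_block_of.
apply/forallP => x; apply/forallP => y; apply/implyP => neq_xy.
have iota_ord (i : 'I_v) : val i \in iota 0 v by rewrite mem_iota ltn_ord.
move/allP/(_ _ (iota_ord x))/allP/(_ _ (iota_ord y))/implyP/(_ neq_xy): pairs => pair_count.
rewrite count_map (@eq_count _ _ (fun s => (val x \in s) && (val y \in s))) // => s.
by rewrite /= !in_set.
Qed.

Lemma alphaK3_add_betaK4 (v : nat) (B : seq {set 'I_v}) :
  is_K34_decomp B -> alphaK3 B + betaK4 B = size B.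
Proof.
case/andP=> sizes _; rewrite /alphaK3 /betaK4 -count_predUI.
rewrite (@eq_count _ (predI _ _) pred0) => [|b /=]; last by case: eqP => // ->.
by rewrite count_pred0 addn0; apply/eqP; rewrite -all_count.
Qed.

Definition rot3 (x : nat) : nat :=
  if x == 18 then 18 else 3 * (x %/ 3) + x.+1 %% 3.

Definition base_blocks : seq (seq nat) :=
  [:: [:: 1; 7; 12; 18]; [:: 4; 16; 18]; [:: 1; 2; 9]; [:: 1; 4; 8; 17];
      [:: 1; 3; 6; 13]; [:: 1; 10; 15]; [:: 1; 5; 14; 16]; [:: 4; 5; 10];
      [:: 4; 6; 11; 12]; [:: 7; 8; 11; 15]; [:: 10; 12; 13; 16]].

Definition design19 : seq (seq nat) :=
  flatten [seq [:: s; map rot3 s; map rot3 (map rot3 s)] | s <- base_blocks]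
  ++ [:: [:: 9; 10; 11; 18]; [:: 15; 16; 17]].

Lemma design19_K34_decomp : nat_K34_decomp 19 design19.
Proof. by vm_compute. Qed.

Lemma size_design19 : size design19 = 35.
Proof. by []. Qed.

Theorem mainTheorem18 :
  exists B : seq {set 'I_19},
    is_K34_decomp B /\ alphaK3 B + betaK4 B <= 35.
Proof.
have decomp := is_K34_decomp_block_of design19_K34_decomp.
exists (map (block_of 19) design19); split => //.
by rewrite alphaK3_add_betaK4 // size_map size_design19.
Qed.
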